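(* Let $S$ be an inverse semigroup. If $S$ is DSC, then $S$ is a group.
   Context: An inverse semigroup is a semigroup in which every element $s$ has a unique $t$ with $sts=s$ and $tst=t$. A diagonal subsemigroup of $S\times S$ is a subsemigroup containing $\{(s,s)\colon s\in S\}$; a congruence is a symmetric and transitive diagonal subsemigroup; $S$ is DSC if every diagonal subsemigroup of $S\times S$ is a congruence on $S$. *)

Definition associative {T : Type} (op : T -> T -> T) : Prop :=
  forall x y z, op x (op y z) = op (op x y) z.

Definition inverse_semigroup {T : Type} (op : T -> T -> T) : Prop :=
  associative op /\
  forall s, exists t, (op (op s t) s = s /\ op (op t s) t = t) /\
    forall t', op (op s t') s = s /\ op (op t' s) t' = t' -> t' = t.

(* A relation on S, i.e. a subset of S x S. *)
Definition diagonal_subsemigroup {T : Type} (op : T -> T -> T)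
    (R : T -> T -> Prop) : Prop :=
  (forall s, R s s) /\
  (forall a b c d, R a b -> R c d -> R (op a c) (op b d)).

Definition congruence {T : Type} (op : T -> T -> T) (R : T -> T -> Prop) : Prop :=
  diagonal_subsemigroup op R /\
  (forall a b, R a b -> R b a) /\
  (forall a b c, R a b -> R b c -> R a c).

Definition DSC {T : Type} (op : T -> T -> T) : Prop :=
  forall R : T -> T -> Prop, diagonal_subsemigroup op R -> congruence op R.

Definition is_group {T : Type} (op : T -> T -> T) : Prop :=
  exists e : T, (forall x, op e x = x /\ op x e = x) /\
    forall x, exists y, op x y = e /\ op y x = e.


(* In an inverse semigroup idempotents commute, so the natural partial order
   [a <= b := a = e b for some idempotent e] is reflexive and compatible with
   multiplication, i.e. a diagonal subsemigroup. Under DSC it is symmetric: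
   for idempotents e, g we get g <= e g as well as e g <= g, which forces
   e g = g; by commutativity any two idempotents coincide. An inverse
   semigroup with a single idempotent e is a group with identity e, since
   s s' and s' s are idempotent for every inverse s' of s. *)

Section InverseSemigroup.

Context {T : Type} (op : T -> T -> T).
Hypothesis IS : inverse_semigroup op.

Definition idempotent (e : T) : Prop := op e e = e.

Definition is_inverse (s t : T) : Prop :=
  op (op s t) s = s /\ op (op t s) t = t.

Definition natural_le (a b : T) : Prop := exists e, idempotent e /\ a = op e b.

Lemma op_assoc x y z : op x (op y z) = op (op x y) z.
Proof. exact (proj1 IS x y z). Qed.

Ltac assoc_r := repeat rewrite <- op_assoc.

Lemma inverse_exists s : exists t, is_inverse s t.
Proof. destruct (proj2 IS s) as [t [Ht _]]. now exists t. Qed.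

Lemma inverse_unique s t t' : is_inverse s t -> is_inverse s t' -> t = t'.
Proof.
  intros Ht Ht'. destruct (proj2 IS s) as [u [_ Hu]].
  now rewrite (Hu t Ht), (Hu t' Ht').
Qed.

Lemma is_inverse_sym s t : is_inverse s t -> is_inverse t s.
Proof. now intros [H1 H2]. Qed.

Lemma idempotent_is_inverse e : idempotent e -> is_inverse e e.
Proof. intros He. unfold is_inverse. now rewrite He, He. Qed.

Lemma idempotent_l e : idempotent e -> forall y, op e (op e y) = op e y.
Proof. intros He y. now rewrite op_assoc, He. Qed.

Lemma idempotent_mul_inverse s t : is_inverse s t -> idempotent (op s t).
Proof.
  intros [Hs _]. unfold idempotent. now rewrite op_assoc, Hs.
Qed.

Lemma idempotent_mul e f : idempotent e -> idempotent f -> idempotent (op e f).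
Proof.
  intros He Hf. destruct (inverse_exists (op e f)) as [x Hx].
  pose proof Hx as [X1 X2]. repeat rewrite <- op_assoc in X1, X2.
  assert (X2' : forall y, op x (op e (op f (op x y))) = op x y).
  { intros y. now rewrite (op_assoc f x y), (op_assoc e _ y), (op_assoc x _ y), X2. }
  (* [f x e] is a second inverse of [e f], hence equal to [x]. *)
  assert (Hx_eq : x = op (op f x) e).
  { apply (inverse_unique (op e f)); [exact Hx |].
    split; assoc_r.
    - now rewrite (idempotent_l f), (idempotent_l e).
    - now rewrite (idempotent_l e), (idempotent_l f), X2'. }
  assert (Hxx : idempotent x).
  { unfold idempotent. rewrite Hx_eq. assoc_r. now rewrite X2'. }
  assert (Hef : op e f = x).
  { apply (inverse_unique x).
    - now apply is_inverse_sym.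
    - now apply idempotent_is_inverse. }
  now rewrite Hef.
Qed.

Lemma idempotent_comm e f : idempotent e -> idempotent f -> op e f = op f e.
Proof.
  intros He Hf.
  pose proof (idempotent_mul e f He Hf) as Hef.
  pose proof (idempotent_mul f e Hf He) as Hfe.
  apply (inverse_unique (op e f)); [now apply idempotent_is_inverse |].
  unfold is_inverse, idempotent in *. repeat rewrite <- op_assoc in *.
  rewrite (idempotent_l f Hf), (idempotent_l e He).
  split; [exact Hef | now rewrite (idempotent_l e He), (idempotent_l f Hf)].
Qed.

Lemma natural_le_refl a : natural_le a a.
Proof.
  destruct (inverse_exists a) as [t Ht]. exists (op a t). split.
  - now apply idempotent_mul_inverse.
  - symmetry. apply Ht.
Qed.

Lemma idempotent_conj b t f :
  is_inverse b t -> idempotent f -> idempotent (op (op b f) t).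
Proof.
  intros Hbt Hf.
  assert (Htb : idempotent (op t b)) by now apply idempotent_mul_inverse, is_inverse_sym.
  destruct Hbt as [Hb _]. unfold idempotent. assoc_r.
  rewrite (op_assoc t b (op f t)), (op_assoc f (op t b)),
    (idempotent_comm f (op t b) Hf Htb).
  now rewrite <- !op_assoc, (idempotent_l f Hf), (op_assoc b t), (op_assoc _ b), Hb.
Qed.

Lemma mul_idempotent_eq b t f :
  is_inverse b t -> idempotent f -> op b f = op (op (op b f) t) b.
Proof.
  intros Hbt Hf.
  assert (Htb : idempotent (op t b)) by now apply idempotent_mul_inverse, is_inverse_sym.
  destruct Hbt as [Hb _].
  now rewrite <- !op_assoc, (idempotent_comm f (op t b) Hf Htb), !op_assoc, Hb.
Qed.

Lemma natural_le_mul a b c d :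
  natural_le a b -> natural_le c d -> natural_le (op a c) (op b d).
Proof.
  intros [e [He ->]] [f [Hf ->]].
  (* e b f d = e (b f t) b d, with b f t idempotent for an inverse t of b. *)
  destruct (inverse_exists b) as [t Ht].
  exists (op e (op (op b f) t)). split.
  - apply idempotent_mul; [exact He | now apply idempotent_conj].
  - now rewrite <- !op_assoc, (op_assoc b f d), (mul_idempotent_eq b t f Ht Hf),
      <- !op_assoc.
Qed.

Lemma natural_le_diagonal_subsemigroup : diagonal_subsemigroup op natural_le.
Proof. split; [exact natural_le_refl | exact natural_le_mul]. Qed.

Section SymmetricOrder.

Hypothesis natural_le_sym : forall a b, natural_le a b -> natural_le b a.

Lemma idempotent_mul_absorb e g : idempotent e -> idempotent g -> op e g = g.
Proof.
  intros He Hg.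
  destruct (natural_le_sym (op e g) g) as [f [Hf Hgf]]; [now exists e |].
  rewrite Hgf, (op_assoc e f), (idempotent_comm e f He Hf), <- op_assoc.
  now rewrite (idempotent_l e He).
Qed.

Lemma idempotent_unique e g : idempotent e -> idempotent g -> e = g.
Proof.
  intros He Hg.
  rewrite <- (idempotent_mul_absorb g e Hg He), (idempotent_comm g e Hg He).
  now apply idempotent_mul_absorb.
Qed.

End SymmetricOrder.

Lemma is_group_of_idempotent_unique (x0 : T) :
  (forall e g, idempotent e -> idempotent g -> e = g) -> is_group op.
Proof.
  intros Huniq. destruct (inverse_exists x0) as [t0 Ht0].
  assert (Hunit : forall x t, is_inverse x t -> op x t = op x0 t0 /\ op t x = op x0 t0).
  { intros x t Ht. split; apply Huniq; auto using idempotent_mul_inverse, is_inverse_sym. }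
  exists (op x0 t0). split.
  - intros x. destruct (inverse_exists x) as [t Ht].
    destruct (Hunit x t Ht) as [Hxt Htx]. split.
    + rewrite <- Hxt. apply Ht.
    + rewrite <- Htx, op_assoc. apply Ht.
  - intros x. destruct (inverse_exists x) as [t Ht]. exists t. now apply Hunit.
Qed.

End InverseSemigroup.

Theorem mainTheorem8 (T : Type) (op : T -> T -> T) (x0 : T) :
  inverse_semigroup op -> DSC op -> is_group op.
Proof.
  intros IS Hdsc.
  destruct (Hdsc (natural_le op) (natural_le_diagonal_subsemigroup op IS))
    as [_ [Hsym _]].
  exact (is_group_of_idempotent_unique op IS x0 (idempotent_unique op IS Hsym)).
Qed.
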